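(* Let $\bm c_0\in\mathbb R^{|E|}$ be a metric cost vector on the complete graph $K_n=(V,E)$ with $TOUR(\bm c_0)=1$, and let $\bar{\bm x}^{(0)}$ be an optimal solution of the subtour elimination problem $SEP(\bm c_0)$. Let \[ \bm c_1 \in \arg\min \Big\{ \sum_{\{i,j\}\in E} \bar x^{(0)}_{ij} c_{ij} \;:\; \sum_{\{i,j\}\in E} \bar z_{ij} c_{ij} \ge 1 \ \forall \bar{\bm z}\in\mathcal T_n,\ c_{ij}\le c_{ik}+c_{jk}\ \forall i,j,k\in V,\ c_{ij}\ge 0\ \forall \{i,j\}\in E \Big\}. \] Then \[ \frac{TOUR(\bm c_1)}{SUBT(\bm c_1)} \ge \frac{TOUR(\bm c_0)}{SUBT(\bm c_0)}. \]
   Context: $K_n=(V,E)$ is the complete undirected graph on $V=\{1,\dots,n\}$, with symmetric edge costs. A cost vector $\bm c$ is metric if $c_{ij}\ge 0$, $c_{ij}\le c_{ik}+c_{jk}$ for all $i,j,k$, (and $c_{ij}=0$ iff $i=j$). For $S\subset V$, $\delta(S)$ is the set of edges with exactly one endpoint in $S$, and $\mathcal S=\{S\subset V: 3\le|S|\le n-3\}$. The subtour elimination polytope is $P_{SEP}=\{\bm x\in\mathbb R^{|E|}_+ : \sum_{e\in\delta(\{v\})}x_e=2\ \forall v,\ \sum_{e\in\delta(S)}x_e\ge2\ \forall S\in\mathcal S,\ 0\le x_e\le1\ \forall e\}$; $SEP(\bm c)$ is the LP $\min\{\bm c^T\bm x:\bm x\in P_{SEP}\}$ and $SUBT(\bm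 c)$ its optimal value. $\mathcal T_n$ is the set of incidence vectors of tours (Hamiltonian cycles) of $K_n$, and $TOUR(\bm c)=\min_{\bm z\in\mathcal T_n}\bm c^T\bm z$ is the optimal TSP value. *)

From HB Require Import structures.
From mathcomp Require Import all_boot all_order all_algebra all_fingroup.
From mathcomp Require Import boolp classical_sets reals.
Set Implicit Arguments. Unset Strict Implicit. Unset Printing Implicit Defensive.
Import Order.TTheory GRing.Theory Num.Theory.
Local Open Scope ring_scope.


(* Vertices of K_n: 'I_n.  Edges {i,j}: ordered pairs (i,j) with i < j. *)
Definition edge (n : nat) := {e : 'I_n * 'I_n | (e.1 < e.2)%N}.

Section Defs.
Variables (R : realType) (n : nat).

(* the cost c_{ij} of the unordered pair {i,j} (0 on the diagonal) *)
Definition pc (c : edge n -> R) (i j : 'I_n) : R :=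
  match @insub _ (fun e : 'I_n * 'I_n => (e.1 < e.2)%N) (edge n) (i, j) with
  | Some e => c e
  | None =>
    match @insub _ (fun e : 'I_n * 'I_n => (e.1 < e.2)%N) (edge n) (j, i) with
    | Some e => c e
    | None => 0
    end
  end.

Definition dot (x c : edge n -> R) : R := \sum_(e : edge n) x e * c e.

Definition in_cut (S : {set 'I_n}) (e : edge n) : bool :=
  ((val e).1 \in S) != ((val e).2 \in S).

Definition cut_sum (x : edge n -> R) (S : {set 'I_n}) : R :=
  \sum_(e : edge n | in_cut S e) x e.

Definition triangle (c : edge n -> R) : Prop :=
  forall i j k : 'I_n, pc c i j <= pc c i k + pc c j k.

Definition nonneg (c : edge n -> R) : Prop := forall e, 0 <= c e.

Definition metric (c : edge n -> R) : Prop :=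
  nonneg c /\ triangle c /\ (forall i j : 'I_n, pc c i j = 0 <-> i = j).

Definition P_SEP (x : edge n -> R) : Prop :=
  (forall e, 0 <= x e <= 1) /\
  (forall v : 'I_n, cut_sum x [set v] = 2) /\
  (forall S : {set 'I_n}, (3 <= #|S| <= n - 3)%N -> 2 <= cut_sum x S).

Definition SUBT (c : edge n -> R) : R := inf [set dot c x | x in P_SEP]%classic.

(* incidence vector of the Hamiltonian cycle s 0, s 1, ..., s (n-1), s 0 *)
Definition tour_vec (s : {perm 'I_n}) (e : edge n) : R :=
  if [exists k : 'I_n,
        ((s k == (val e).1) && (s (ordS k) == (val e).2)) ||
        ((s k == (val e).2) && (s (ordS k) == (val e).1))]
  then 1 else 0.

Definition is_tour (z : edge n -> R) : Prop := exists s : {perm 'I_n}, z = tour_vec s.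

Definition TOUR (c : edge n -> R) : R := inf [set dot c z | z in is_tour]%classic.

Definition SEP_opt (c x : edge n -> R) : Prop :=
  P_SEP x /\ forall y, P_SEP y -> dot c x <= dot c y.

Definition c1_feasible (c : edge n -> R) : Prop :=
  (forall z, is_tour z -> 1 <= dot z c) /\ triangle c /\ nonneg c.

Definition c1_argmin (x c : edge n -> R) : Prop :=
  c1_feasible c /\ forall c', c1_feasible c' -> dot x c <= dot x c'.

End Defs.

(* Since TOUR c0 = 1, the cost c0 is feasible for the problem
   defining c1, so SUBT c1 <= x0 . c1 <= x0 . c0 = SUBT c0, while every tour
   costs at least 1 under c1; hence TOUR c1 / SUBT c1 >= 1 / SUBT c0.  The one
   delicate point is SUBT c1 > 0: c1 is not identically zero, and if
   c1(u, v) > 0 then the set of vertices at c1-distance 0 from u separates u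
   from v, every edge leaving it has positive cost by the triangle inequality,
   and every point of the subtour polytope crosses it with weight at least 1. *)

From mathcomp Require Import all_boot all_order all_algebra all_fingroup.
From mathcomp Require Import boolp classical_sets reals.
From mathcomp Require Import lra zify.
Import Order.TTheory GRing.Theory Num.Theory.
Local Open Scope ring_scope.
Set Implicit Arguments. Unset Strict Implicit.

Section Cuts.
Variables (R : realType) (n : nat).
Implicit Types (c x : edge n -> R) (S : {set 'I_n}).

Lemma pc_edge c (e : edge n) : pc c (val e).1 (val e).2 = c e.
Proof.
rewrite /pc; case: insubP => [e' _ He'|]; last by rewrite -surjective_pairing (valP e).
by congr c; apply: val_inj; rewrite He' -surjective_pairing.
Qed.

Lemma pc_sym c i j : pc c i j = pc c j i.
Proof.
rewrite /pc; case: insubP => [e1 H1 _|_]; case: insubP => [e2 H2 _|_] //=.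
by move: H1 H2 => /= H1 /(ltn_trans H1); rewrite ltnn.
Qed.

Lemma pc_diag c i : pc c i i = 0.
Proof. by rewrite /pc !insubN //= ltnn. Qed.

Lemma pc_ge0 c i j : nonneg c -> 0 <= pc c i j.
Proof. by move=> c_ge0; rewrite /pc; do 2 case: insubP => //. Qed.

Lemma edge_val_ends (e : edge n) (a b : 'I_n) :
  ((val e).1 == a) && ((val e).2 == b) || ((val e).1 == b) && ((val e).2 == a) ->
  val e = if (a < b)%N then (a, b) else (b, a).
Proof.
have := valP e; case: (val e) => p q /= pq.
by case/orP => /andP[/eqP <- /eqP <-]; rewrite ?pq // ltnNge ltnW.
Qed.

Lemma cut_sumC x S : cut_sum x (~: S) = cut_sum x S.
Proof. by apply: eq_bigl => e; rewrite /in_cut !inE; do 2 case: (_ \in S). Qed.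

Lemma cut_sum_pair x (a b : 'I_n) : (forall e, 0 <= x e <= 1) -> a != b ->
  cut_sum x [set a] <= cut_sum x [set a; b] + 1.
Proof.
move=> x01 ab; rewrite /cut_sum (bigID (in_cut [set a; b])) /= lerD //.
  rewrite [leRHS]big_mkcond [leLHS]big_mkcond ler_sum // => e _.
  by case: (in_cut [set a; b] e); case: (in_cut [set a] e) => //=; case/andP: (x01 e).
(* The only edge of delta({a}) outside delta({a, b}) is {a, b} itself. *)
pose P := [pred e | in_cut [set a] e && ~~ in_cut [set a; b] e].
have ends e : P e ->
    ((val e).1 == a) && ((val e).2 == b) || ((val e).1 == b) && ((val e).2 == a).
  rewrite inE /in_cut !inE; case: (val e) => p q /=.
  case: (p =P a) => [->|_]; case: (q =P a) => [->|_] //=;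
    by rewrite ?(negPf ab) ?(eq_sym b) ?(negPf ab); case: (_ == b).
have P_le1 : (#|P| <= 1)%N.
  apply/card_le1_eqP => e f Pe Pf; apply: val_inj.
  by rewrite (edge_val_ends (ends e Pe)) (edge_val_ends (ends f Pf)).
apply: (@le_trans _ _ (\sum_(e in P) 1)).
  by apply: ler_sum => e _; case/andP: (x01 e).
by rewrite sumr_const -[leRHS]/(1%:R) ler_nat.
Qed.

Lemma cut_sum_small x S : P_SEP x -> (1 <= #|S| <= 2)%N -> 1 <= cut_sum x S.
Proof.
move=> [x01 [deg2 _]] /andP[S_gt0 S_le2].
have [/cards1P [a ->]|/cards2P [a [b [ab ->]]]] : #|S| == 1%N \/ #|S| == 2%N by lia.
  by rewrite deg2; lra.
by have := cut_sum_pair x01 ab; rewrite deg2; lra.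
Qed.

Lemma cut_sum_sep x S (u v : 'I_n) :
  P_SEP x -> u \in S -> v \notin S -> 1 <= cut_sum x S.
Proof.
move=> xSEP uS vS.
have S_gt0 : (0 < #|S|)%N by apply/card_gt0P; exists u.
have SC_gt0 : (0 < #|~: S|)%N by apply/card_gt0P; exists v; rewrite inE.
have := cardsC S; rewrite card_ord => cardS.
have [S_le2|S_gt2] := leqP #|S| 2; first by apply: cut_sum_small; rewrite ?S_gt0.
have [S_ge|S_lt] := leqP (n - 2) #|S|.
  by rewrite -cut_sumC; apply: cut_sum_small => //; lia.
have [_ [_ subtour]] := xSEP.
have S_mid : (3 <= #|S| <= n - 3)%N by lia.
by have := subtour S S_mid; lra.
Qed.

Lemma dot_ge_cut c x S d : (forall e, 0 <= x e) -> nonneg c ->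
  (forall e, in_cut S e -> d <= c e) -> d * cut_sum x S <= dot c x.
Proof.
move=> x_ge0 c_ge0 d_le; rewrite /dot (bigID (in_cut S)) /= mulr_sumr.
rewrite -[leLHS]addr0 lerD ?sumr_ge0 // => [|e _]; last by rewrite mulr_ge0.
by apply: ler_sum => e Se; rewrite ler_wpM2r ?d_le.
Qed.

Lemma SEP_cost_lbound c (e : edge n) : nonneg c -> triangle c -> 0 < c e ->
  exists2 d, 0 < d & forall x, P_SEP x -> d <= dot c x.
Proof.
move=> c_ge0 c_tri ce_gt0; set u := (val e).1.
set S := [set w | pc c u w == 0].
have leave_pos a b : a \in S -> b \notin S -> 0 < pc c a b.
  rewrite !inE => /eqP ua ub; have ub_gt0 : 0 < pc c u b by rewrite lt_def ub pc_ge0.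
  by apply: lt_le_trans ub_gt0 _; rewrite -[pc c a b]add0r -ua [pc c a b]pc_sym; apply: c_tri.
have cut_pos f : in_cut S f -> 0 < c f.
  rewrite /in_cut -(pc_edge c f).
  case Sa: (_ \in S); case Sb: (_ \in S) => //= _; first by rewrite leave_pos ?Sb.
  by rewrite pc_sym leave_pos ?Sa.
have uS : u \in S by rewrite inE pc_diag.
have vS : (val e).2 \notin S by rewrite inE pc_edge gt_eqF.
have eS : in_cut S e by rewrite /in_cut uS vS.
have [g Sg g_min] := arg_minP c eS.
exists (c g); first exact: cut_pos.
move=> x xSEP; have [x01 _] := xSEP.
have x_ge0 f : 0 <= x f by case/andP: (x01 f).
have := dot_ge_cut x_ge0 c_ge0 g_min; have := cut_sum_sep xSEP uS vS.
have := cut_pos g Sg; nra.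
Qed.

End Cuts.

Section OptimalValues.
Variables (R : realType) (n : nat).
Implicit Types (c x z : edge n -> R).

Lemma dotC x c : dot x c = dot c x.
Proof. by apply: eq_bigr => e _; rewrite mulrC. Qed.

Lemma dot_ge0 x c : (forall e, 0 <= x e) -> nonneg c -> 0 <= dot x c.
Proof. by move=> x_ge0 c_ge0; apply: sumr_ge0 => e _; rewrite mulr_ge0. Qed.

Lemma SUBT_le c x : nonneg c -> P_SEP x -> SUBT c <= dot c x.
Proof.
move=> c_ge0 xSEP; apply: ge_inf; last by exists x.
exists 0 => _ [y [y01 _] <-]; rewrite dotC dot_ge0 // => e.
by case/andP: (y01 e).
Qed.

Lemma SUBT_ge c x d : P_SEP x -> (forall y, P_SEP y -> d <= dot c y) -> d <= SUBT c.
Proof.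
move=> xSEP d_le; apply: lb_le_inf; first by exists (dot c x), x.
by move=> _ [y ySEP <-]; apply: d_le.
Qed.

Lemma SEP_opt_SUBT c x : nonneg c -> SEP_opt c x -> SUBT c = dot c x.
Proof.
move=> c_ge0 [xSEP x_opt]; apply/le_anti.
by rewrite SUBT_le //= (SUBT_ge xSEP x_opt).
Qed.

Lemma tour_vec_ge0 (s : {perm 'I_n}) e : 0 <= tour_vec R s e.
Proof. by rewrite /tour_vec; case: ifP. Qed.

Lemma TOUR_le c z : nonneg c -> is_tour z -> TOUR c <= dot c z.
Proof.
move=> c_ge0 ztour; apply: ge_inf; last by exists z.
by exists 0 => _ [_ [s ->] <-]; rewrite dotC dot_ge0 // => e; apply: tour_vec_ge0.
Qed.

Lemma TOUR_ge c d : (forall z, is_tour z -> d <= dot c z) -> d <= TOUR c.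
Proof.
move=> d_le; apply: lb_le_inf; last by move=> _ [z ztour <-]; apply: d_le.
by exists (dot c (tour_vec R 1%g)), (tour_vec R 1%g); first by exists 1%g.
Qed.

Lemma c1_feasible_TOUR c : nonneg c -> triangle c -> 1 <= TOUR c -> c1_feasible c.
Proof.
move=> c_ge0 c_tri TOUR_ge1; split=> // z ztour.
by rewrite dotC; apply: le_trans TOUR_ge1 (TOUR_le c_ge0 ztour).
Qed.

Lemma c1_feasible_TOUR_ge1 c : c1_feasible c -> 1 <= TOUR c.
Proof. by case=> tour_ge1 _; apply: TOUR_ge => z /tour_ge1; rewrite dotC. Qed.

Lemma c1_feasible_edge_gt0 c : c1_feasible c -> exists e, 0 < c e.
Proof.
move=> [tour_ge1 [_ c_ge0]]; apply/not_existsP => c_le0.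
have c0 e : c e = 0 by apply/eqP; rewrite eq_le c_ge0 andbT leNgt; apply/negP/c_le0.
have := tour_ge1 (tour_vec R 1%g) (ex_intro _ 1%g erefl).
by rewrite /dot big1 ?ler10 // => e _; rewrite c0 mulr0.
Qed.

Lemma c1_feasible_SUBT_gt0 c x : c1_feasible c -> P_SEP x -> 0 < SUBT c.
Proof.
move=> cfeas xSEP; have [_ [c_tri c_ge0]] := cfeas.
have [e ce_gt0] := c1_feasible_edge_gt0 cfeas.
have [d d_gt0 d_le] := SEP_cost_lbound c_ge0 c_tri ce_gt0.
exact: lt_le_trans d_gt0 (SUBT_ge xSEP d_le).
Qed.

End OptimalValues.

Theorem lemma3 (R : realType) (n : nat) (hn : (3 <= n)%N)
  (c0 x0 c1 : edge n -> R) :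
  metric c0 -> TOUR c0 = 1 -> SEP_opt c0 x0 -> c1_argmin x0 c1 ->
  TOUR c0 / SUBT c0 <= TOUR c1 / SUBT c1.
Proof.
move=> [c0_ge0 [c0_tri _]] TOUR0 x0_opt [c1_feas c1_min].
have x0SEP := x0_opt.1.
have c0_feas : c1_feasible c0 by apply: c1_feasible_TOUR; rewrite ?TOUR0.
have SUBT1_gt0 := c1_feasible_SUBT_gt0 c1_feas x0SEP.
have SUBT10 : SUBT c1 <= SUBT c0.
  rewrite (SEP_opt_SUBT c0_ge0 x0_opt) -dotC.
  apply: le_trans (c1_min _ c0_feas); rewrite dotC SUBT_le //; exact: c1_feas.2.2.
have SUBT0_gt0 := lt_le_trans SUBT1_gt0 SUBT10.
rewrite TOUR0 mul1r; apply: le_trans (ler_wpM2r _ (c1_feasible_TOUR_ge1 c1_feas)).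
  by rewrite mul1r lef_pV2 ?posrE.
by rewrite invr_ge0 ltW.
Qed.
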